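(* Let $(A,E,\varepsilon,\tau)$ be an analytical $B$-$B$-non-commutative probability space and let $\widetilde{E}:L_2(A,\tau)\to L_2(B,\tau_B)$ denote the orthogonal projection. For all $a\in A$, $b,b_1,b_2\in B$, $\xi,\xi_1,\xi_2\in L_2(A,\tau)$ and $\zeta\in L_2(B,\tau_B)$: (i) $\tau(\xi)=\tau_B(\widetilde{E}(\xi))$; (ii) $\widetilde{E}(aL_b)=\widetilde{E}(aR_b)$; (iii) $\widetilde{E}(L_{b_1}R_{b_2}\xi)=b_1\widetilde{E}(\xi)b_2$; (iv) if $a\in A_\ell$, then $\widetilde{E}(a\zeta)=E(a)\zeta$; (v) if $a\in A_r$, then $\widetilde{E}(a\zeta)=\zeta E(a)$; (vi) if $\tau(L_b\xi_1)=\tau(L_b\xi_2)$ for all $b\in B$, then $\widetilde{E}(\xi_1)=\widetilde{E}(\xi_2)$; (vii) if $\tau(R_b\xi_1)=\tau(R_b\xi_2)$ for all $b\in B$, then $\widetilde{E}(\xi_1)=\widetilde{E}(\xi_2)$.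
   Context: Let $B$ be a unital $*$-algebra. A $B$-$B$-non-commutative probability space is a triple $(A,E,\varepsilon)$: $A$ a unital $*$-algebra, $\varepsilon:B\otimes B^{\mathrm{op}}\to A$ a unital $*$-homomorphism injective on $B\otimes 1$ and on $1\otimes B^{\mathrm{op}}$, and $E:A\to B$ unital linear with $E(\varepsilon(b_1\otimes b_2)a)=b_1E(a)b_2$ and $E(a\varepsilon(b\otimes 1))=E(a\varepsilon(1\otimes b))$. Write $L_b=\varepsilon(b\otimes1)$, $R_b=\varepsilon(1\otimes b)$, $A_\ell$ for the commutant of $\{R_b\}$ and $A_r$ for the commutant of $\{L_b\}$ in $A$. An analytical $B$-$B$-non-commutative probability space is $(A,E,\varepsilon,\tau)$ where $\tau$ is a state on $A$ with $\tau(a)=\tau(L_{E(a)})=\tau(R_{E(a)})$, $\tau_B(b):=\tau(L_b)$ is a tracial state on $B$, left multiplication by each $a\in A$ is bounded on $A/N_\tau$ ($N_\tau=\{a:\tau(a^*a)=0\}$) and so extends to a bounded operator on the Hilbert space $L_2(A,\tau)$ (completion of $A/N_\tau$ with $\langle a_1,a_2\rangle=\tau(a_2^*a_1)$), and $E$ is completely positive on $A_\ell$ and on $A_r$. Elements of $A$ are written for their classes in $L_2(A,\tau)$. $L_2(B,\tau_B)$ is identified with the closure of $\{L_b+N_\tau\}$ in $L_2(A,\tau)$; left and right multiplication by elements of $B$ extend to bounded operators on $L_2(B,\tau_B)$, and for $\zeta\in L_2(B,\tau_B)$ one has $L_{b_1}R_{b_2}\zeta=b_1\zeta b_2$. For $\xi\in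 L_2(A,\tau)$, $\tau(\xi):=\langle \xi,1_A+N_\tau\rangle$, and $\tau_B(\zeta)=\tau(\zeta)$ for $\zeta\in L_2(B,\tau_B)$. *)

(* scalars are the complex numbers R[i] (mathcomp-real-closed)
   over an arbitrary realType R; *-algebras are algType R[i] with an explicit
   involution; L_2(A,tau) is modelled by a Hilbert space with a dense GNS map. *)
From HB Require Import structures.
From mathcomp Require Import all_boot all_order all_algebra.
From mathcomp Require Import complex reals.
Set Implicit Arguments. Unset Strict Implicit. Unset Printing Implicit Defensive.
Import GRing.Theory Num.Theory.
Local Open Scope ring_scope.

Section Defs.
Variable R : realType.
Local Notation C := R[i].

Definition star_alg (A : algType C) (s : A -> A) : Prop :=
  [/\ (forall x y, s (x + y) = s x + s y),
      (forall (c : C) x, s (c *: x) = c^* *: s x),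
      (forall x y, s (x * y) = s y * s x) &
      forall x, s (s x) = x].

Definition clinear (U V : lmodType C) (f : U -> V) : Prop :=
  forall (c : C) x y, f (c *: x + y) = c *: f x + f y.

Definition mxstar (A : algType C) (s : A -> A) n (X : 'M[A]_n) : 'M[A]_n :=
  map_mx s X^T.

Definition mx_pos (A : algType C) (s : A -> A) n (X : 'M[A]_n) : Prop :=
  exists l : seq 'M[A]_n, X = \sum_(Y <- l) (mxstar s Y *m Y).

Definition cp_on (A B : algType C) (sA : A -> A) (sB : B -> B)
  (E : A -> B) (S : A -> Prop) : Prop :=
  forall n (X : 'M[A]_n), (forall i j, S (X i j)) ->
    mx_pos sB (map_mx E (mxstar sA X *m X)).

Definition commutant (A : Type) (mul : A -> A -> A) (D : A -> Prop) (a : A) : Prop :=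
  forall d, D d -> mul a d = mul d a.

(* eps : B (x) B^op -> A is encoded by its two commuting restrictions
   L b = eps (b (x) 1) and Rm b = eps (1 (x) b) (universal property of the
   algebraic tensor product). *)
Definition BB_ncps (A B : algType C) (sA : A -> A) (sB : B -> B)
  (L Rm : B -> A) (E : A -> B) : Prop :=
  [/\ star_alg sA /\ star_alg sB,
      [/\ clinear L, (forall x y, L (x * y) = L x * L y), L 1 = 1,
          (forall x, L (sB x) = sA (L x)) & injective L],
      [/\ clinear Rm, (forall x y, Rm (x * y) = Rm y * Rm x), Rm 1 = 1,
          (forall x, Rm (sB x) = sA (Rm x)) & injective Rm],
      (forall x y, L x * Rm y = Rm y * L x) &
      [/\ clinear E, E 1 = 1,
          (forall b1 b2 a, E (L b1 * Rm b2 * a) = b1 * E a * b2) &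
          forall a b, E (a * L b) = E (a * Rm b)]].

Definition analytical_BB_ncps (A B : algType C) (sA : A -> A) (sB : B -> B)
  (L Rm : B -> A) (E : A -> B) (tau : A -> C) : Prop :=
  [/\ BB_ncps sA sB L Rm E /\
      [/\ clinear tau, tau 1 = 1 & forall a, 0 <= tau (sA a * a)],
      (forall a, tau a = tau (L (E a)) /\ tau a = tau (Rm (E a))),
      (* tau_B(b) := tau(L b) is a tracial state on B *)
      [/\ tau (L 1) = 1, (forall b, 0 <= tau (L (sB b * b))) &
          forall b1 b2, tau (L (b1 * b2)) = tau (L (b2 * b1))],
      (forall a, exists K : C, 0 <= K /\
        forall x, tau (sA (a * x) * (a * x)) <= K * tau (sA x * x)) &
      (* E completely positive on A_l and A_r *)
      cp_on sA sB E (commutant *%R (fun d => exists b, d = Rm b)) /\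
      cp_on sA sB E (commutant *%R (fun d => exists b, d = L b))].

Definition hilbert_space (H : lmodType C) (ip : H -> H -> C) : Prop :=
  [/\ (forall (c : C) x y z, ip (c *: x + y) z = c * ip x z + ip y z),
      (forall x y, ip y x = (ip x y)^*),
      (forall x, 0 <= ip x x),
      (forall x, ip x x = 0 -> x = 0) &
      forall u : nat -> H,
        (forall e : C, 0 < e -> exists N, forall m n, (N <= m)%N -> (N <= n)%N ->
            ip (u m - u n) (u m - u n) < e) ->
        exists xi, forall e : C, 0 < e -> exists N, forall n, (N <= n)%N ->
            ip (u n - xi) (u n - xi) < e].

Definition hclosure (H : lmodType C) (ip : H -> H -> C) (S : H -> Prop) (xi : H) : Prop :=
  forall e : C, 0 < e -> exists eta, S eta /\ ip (xi - eta) (xi - eta) < e.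

(* (H, ip, iota) is L_2(A,tau): a Hilbert space with a linear map
   iota : A -> H (a |-> a + N_tau) with dense range and
   <iota a1, iota a2> = tau(a2^* a1).  This determines L_2(A,tau) up to
   unitary isomorphism. *)
Definition L2_of (A : algType C) (sA : A -> A) (tau : A -> C)
  (H : lmodType C) (ip : H -> H -> C) (iota : A -> H) : Prop :=
  [/\ hilbert_space ip, clinear iota,
      (forall a1 a2, ip (iota a1) (iota a2) = tau (sA a2 * a1)) &
      forall xi, hclosure ip (fun eta => exists a, eta = iota a) xi].

Definition left_mult_ext (A : algType C) (H : lmodType C) (ip : H -> H -> C)
  (iota : A -> H) (lam : A -> H -> H) : Prop :=
  forall a, [/\ clinear (lam a),
    (exists K : C, 0 <= K /\ forall xi, ip (lam a xi) (lam a xi) <= K * ip xi xi) &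
    forall x, lam a (iota x) = iota (a * x)].

(* L_2(B,tau_B) = closure of { L b + N_tau } in H *)
Definition L2B (A B : algType C) (H : lmodType C) (ip : H -> H -> C)
  (iota : A -> H) (L : B -> A) : H -> Prop :=
  hclosure ip (fun eta => exists b, eta = iota (L b)).

Definition orth_proj (H : lmodType C) (ip : H -> H -> C) (S : H -> Prop)
  (P : H -> H) : Prop :=
  forall xi, S (P xi) /\ forall eta, S eta -> ip (xi - P xi) eta = 0.

End Defs.

From mathcomp Require Import all_boot all_order all_algebra.
From mathcomp Require Import complex reals.
From mathcomp Require Import ring.
Set Implicit Arguments. Unset Strict Implicit. Unset Printing Implicit Defensive.
Import Order.TTheory GRing.Theory Num.Theory.
Local Open Scope ring_scope.

(** Every identity is first checked on the dense image of A (or on the image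
    of B) in L_2(A,tau), where it reduces to the bimodule and trace properties
    of E and tau, and is then carried over to the closure because all maps
    involved are bounded; the projection is identified through the fact that
    xi - Et xi is the unique correction into L_2(B) orthogonal to L(B).  The
    one computation that is not formal is that x L_b and x R_b are the same
    vector of L_2(A,tau): with y = x (L_b - R_b), the squared norm of y is
    tau(y^* y) = tau(L(E(y^* y))), and E(y^* y) = 0 because E is a B-bimodule
    map with E(x^* x L_b) = E(x^* x R_b). *)

Lemma mul_div_addr1_lt (F : numFieldType) (K e : F) :
  0 <= K -> 0 < e -> K * (e / (K + 1)) < e.
Proof.
move=> K0 e0; have K1 : 0 < K + 1 by rewrite ltr_wpDl.
have := ltr_pM2r (divr_gt0 e0 K1) K (K + 1).
by rewrite ltrDl ltr01 [(K + 1) * _]mulrC divfK ?lt0r_neq0 // => <-.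
Qed.

Lemma eq0_of_le_mul (F : numFieldType) (x K : F) :
  0 <= x -> 0 <= K -> (forall e, 0 < e -> x <= K * e) -> x = 0.
Proof.
move=> x0 K0 hx; have [//|xn0] := eqVneq x 0.
have xp : 0 < x by rewrite lt0r xn0.
have ep : 0 < x / (K + 1) by rewrite divr_gt0 // ltr_wpDl.
by have := le_lt_trans (hx _ ep) (mul_div_addr1_lt K0 xp); rewrite ltxx.
Qed.

Lemma normB_sqr_le (F : numDomainType) (p q : F) :
  `|p - q| ^+ 2 <= 2 * `|p| ^+ 2 + 2 * `|q| ^+ 2.
Proof.
apply: (@le_trans _ _ ((`|p| + `|q|) ^+ 2)).
  by rewrite lerXn2r ?ler_normB // qualifE /= ?addr_ge0.
have -> : 2 * `|p| ^+ 2 + 2 * `|q| ^+ 2 = (`|p| + `|q|) ^+ 2 + (`|p| - `|q|) ^+ 2.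
  by ring.
by rewrite lerDl -realEsqr realB // normr_real.
Qed.

Section ComplexLinear.
Variables (R : realType) (U V : lmodType R[i]) (f : U -> V).
Hypothesis f_lin : clinear f.

Lemma clinear0 : f 0 = 0.
Proof.
have := f_lin 1 0 0; rewrite scaler0 addr0 scale1r => f0.
by apply: (addrI (f 0)); rewrite addr0.
Qed.

Lemma clinearB x y : f (x - y) = f x - f y.
Proof.
have := f_lin (-1) y x; rewrite !scaleN1r addrC => ->.
by rewrite addrC.
Qed.

End ComplexLinear.

Section Hilbert.
Variables (R : realType) (H : lmodType R[i]) (ip : H -> H -> R[i]).
Hypothesis hH : hilbert_space ip.

Lemma ipDZl c x y z : ip (c *: x + y) z = c * ip x z + ip y z.
Proof. by case: hH. Qed.

Lemma ipC x y : ip y x = (ip x y)^*.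
Proof. by case: hH => _ h _ _ _; apply: h. Qed.

Lemma ip_ge0 x : 0 <= ip x x.
Proof. by case: hH => _ _ h _ _; apply: h. Qed.

Lemma ipxx_eq0 x : ip x x = 0 -> x = 0.
Proof. by case: hH => _ _ _ h _; apply: h. Qed.

Lemma ip0l z : ip 0 z = 0.
Proof.
have := ipDZl 1 0 0 z; rewrite scaler0 addr0 mul1r => h0.
by apply: (addrI (ip 0 z)); rewrite addr0.
Qed.

Lemma ipDl x y z : ip (x + y) z = ip x z + ip y z.
Proof. by rewrite -{1}[x]scale1r ipDZl mul1r. Qed.

Lemma ipZl c x z : ip (c *: x) z = c * ip x z.
Proof. by rewrite -[c *: x]addr0 ipDZl ip0l addr0. Qed.

Lemma ipBl x y z : ip (x - y) z = ip x z - ip y z.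
Proof. by rewrite ipDl -scaleN1r ipZl mulN1r. Qed.

Lemma ip0r z : ip z 0 = 0.
Proof. by rewrite ipC ip0l rmorph0. Qed.

Lemma ipZr c x z : ip z (c *: x) = c^* * ip z x.
Proof. by rewrite !(ipC _ z) ipZl rmorphM. Qed.

Lemma ipBr x y z : ip z (x - y) = ip z x - ip z y.
Proof. by rewrite !(ipC _ z) ipBl rmorphB. Qed.

Lemma cauchy_schwarz v w : `|ip v w| ^+ 2 <= ip v v * ip w w.
Proof.
have [M0|Mn0] := eqVneq (ip w w) 0.
  by rewrite (ipxx_eq0 M0) ip0r ip0l normr0 expr0n /= mulr0.
have Mgt0 : 0 < ip w w by rewrite lt0r Mn0 ip_ge0.
set c := ip v w; set M := ip w w; set N := ip v v.
have Mc : M^* = M by rewrite geC0_conj // ip_ge0.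
(* the squared norm of the component of v orthogonal to w *)
have := ip_ge0 (v - (c / M) *: w).
rewrite ipBl !ipBr !ipZl !ipZr -/c -/M -/N [ip w v]ipC -/c.
have -> : (c / M)^* = c^* / M by rewrite rmorphM fmorphV /= Mc.
have -> : N - c^* / M * c - (c / M * c^* - c / M * (c^* / M * M)) = N - c * c^* / M.
  by field.
by rewrite subr_ge0 ler_pdivrMr // -normCK mulrC.
Qed.

Definition bounded_op (T : H -> H) :=
  exists K : R[i], 0 <= K /\ forall x, ip (T x) (T x) <= K * ip x x.

Definition bounded_functional (g : H -> R[i]) :=
  exists K : R[i], 0 <= K /\ forall x, `|g x| ^+ 2 <= K * ip x x.

Lemma bounded_op_id : bounded_op id.
Proof. by exists 1; split=> // x; rewrite mul1r. Qed.

Lemma bounded_functional_ip (T : H -> H) w :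
  bounded_op T -> bounded_functional (fun x => ip (T x) w).
Proof.
move=> [K [K0 hK]]; exists (K * ip w w); split; first by rewrite mulr_ge0 ?ip_ge0.
move=> x; apply: (le_trans (cauchy_schwarz _ _)).
by rewrite mulrAC ler_wpM2r ?ip_ge0.
Qed.

Lemma bounded_functionalB g1 g2 :
  bounded_functional g1 -> bounded_functional g2 ->
  bounded_functional (fun x => g1 x - g2 x).
Proof.
move=> [K1 [K10 h1]] [K2 [K20 h2]]; exists (2 * K1 + 2 * K2).
split; first by rewrite addr_ge0 ?mulr_ge0.
move=> x; apply: (le_trans (normB_sqr_le _ _)).
by rewrite [_ * ip x x]mulrDl -!mulrA lerD // ler_pM2l.
Qed.

Lemma hclosure_self (D : H -> Prop) eta : D eta -> hclosure ip D eta.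
Proof. by move=> De e e0; exists eta; rewrite subrr ip0l. Qed.

Lemma hclosure_eq0 (D : H -> Prop) (g : H -> R[i]) :
  {morph g : x y / x - y} -> bounded_functional g ->
  (forall eta, D eta -> g eta = 0) -> forall z, hclosure ip D z -> g z = 0.
Proof.
move=> gB [K [K0 hK]] g0 z hz.
suff : `|g z| ^+ 2 = 0 by move/eqP; rewrite sqrf_eq0 normr_eq0 => /eqP.
apply: (eq0_of_le_mul _ K0); first exact: exprn_ge0.
move=> e e0; have [eta [Deta lt_e]] := hz e e0.
have -> : g z = g (z - eta) by rewrite gB (g0 _ Deta) subr0.
by apply: (le_trans (hK _)); rewrite ler_wpM2l // ltW.
Qed.

Lemma hclosure_eq (D : H -> Prop) (g1 g2 : H -> R[i]) :
  {morph g1 : x y / x - y} -> {morph g2 : x y / x - y} ->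
  bounded_functional g1 -> bounded_functional g2 ->
  (forall eta, D eta -> g1 eta = g2 eta) ->
  forall z, hclosure ip D z -> g1 z = g2 z.
Proof.
move=> g1B g2B bg1 bg2 g12 z hz; apply/eqP; rewrite -subr_eq0; apply/eqP.
apply: (hclosure_eq0 _ (bounded_functionalB bg1 bg2) _ hz).
  by move=> x y; rewrite g1B g2B; ring.
by move=> eta /g12 ->; rewrite subrr.
Qed.

Lemma hclosure_orth (D : H -> Prop) v :
  (forall d, D d -> ip v d = 0) -> forall eta, hclosure ip D eta -> ip v eta = 0.
Proof.
move=> hv eta heta.
have ip_eta_v : ip eta v = 0.
  apply: (@hclosure_eq0 D (ip^~ v)) heta.
  - by move=> x y; rewrite ipBl.
  - exact: (bounded_functional_ip v bounded_op_id).
  - by move=> d /hv vd; rewrite ipC vd rmorph0.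
by rewrite ipC ip_eta_v rmorph0.
Qed.

Lemma hclosure_map (D : H -> Prop) (T : H -> H) :
  {morph T : x y / x - y} -> bounded_op T -> (forall d, D d -> D (T d)) ->
  forall z, hclosure ip D z -> hclosure ip D (T z).
Proof.
move=> TB [K [K0 hK]] TD z hz e e0.
have ep : 0 < e / (K + 1) by rewrite divr_gt0 // ltr_wpDl.
have [eta [Deta lt_e]] := hz _ ep.
exists (T eta); split; first exact: TD.
rewrite -TB; apply: (le_lt_trans (hK _)).
apply: le_lt_trans (mul_div_addr1_lt K0 e0).
by rewrite ler_wpM2l // ltW.
Qed.

Section Projection.
Variables (D : H -> Prop) (P : H -> H).
Hypothesis hP : orth_proj ip (hclosure ip D) P.

Lemma orth_proj_uniq xi y : hclosure ip D y ->
  (forall d, D d -> ip (xi - y) d = 0) -> P xi = y.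
Proof.
move=> hy hxy; have [hPxi hO] := hP xi.
have orth eta : hclosure ip D eta -> ip (P xi - y) eta = 0.
  move=> heta.
  have -> : P xi - y = (xi - y) - (xi - P xi).
    by rewrite opprB addrCA addrAC subrr add0r.
  by rewrite ipBl (hclosure_orth hxy heta) hO // subrr.
apply/eqP; rewrite -subr_eq0; apply/eqP; apply: ipxx_eq0.
by rewrite ipBr !orth // subrr.
Qed.

Lemma orth_proj_eq xi1 xi2 :
  (forall d, D d -> ip (xi1 - xi2) d = 0) -> P xi1 = P xi2.
Proof.
move=> h; apply: orth_proj_uniq; first exact: (hP xi2).1.
move=> d Dd.
have -> : xi1 - P xi2 = (xi1 - xi2) + (xi2 - P xi2) by rewrite addrA subrK.
by rewrite ipDl h // (hP xi2).2 ?addr0 //; apply: hclosure_self.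
Qed.

End Projection.
End Hilbert.

Section ProbabilitySpace.
Variables (R : realType) (A B : algType R[i]) (sA : A -> A) (sB : B -> B)
  (L Rm : B -> A) (E : A -> B) (tau : A -> R[i])
  (H : lmodType R[i]) (ip : H -> H -> R[i]) (iota : A -> H)
  (lam : A -> H -> H) (Et : H -> H).
Hypotheses (hncps : analytical_BB_ncps sA sB L Rm E tau)
  (hL2 : L2_of sA tau ip iota) (hlam : left_mult_ext ip iota lam)
  (hEt : orth_proj ip (L2B ip iota L) Et).

Local Notation LB := (fun eta => exists b, eta = iota (L b)).

Let hBB : BB_ncps sA sB L Rm E.
Proof. by case: hncps => [[]]. Qed.

Let hH : hilbert_space ip.
Proof. by case: hL2. Qed.

Lemma sAM x y : sA (x * y) = sA y * sA x.
Proof. by case: hBB => [[[_ _ h _] _] _ _ _ _]. Qed.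

Lemma sAK x : sA (sA x) = x.
Proof. by case: hBB => [[[_ _ _ h] _] _ _ _ _]. Qed.

Lemma sAB x y : sA (x - y) = sA x - sA y.
Proof.
case: hBB => [[[sAD sAZ _ _] _] _ _ _ _].
by rewrite sAD -scaleN1r sAZ rmorphN1 scaleN1r.
Qed.

Lemma sBK x : sB (sB x) = x.
Proof. by case: hBB => [[_ [_ _ _ h]] _ _ _ _]. Qed.

Lemma L0 : L 0 = 0.
Proof. by case: hBB => _ [hL _ _ _ _] _ _ _; exact: clinear0. Qed.

Lemma LM x y : L (x * y) = L x * L y.
Proof. by case: hBB => _ [_ h _ _ _] _ _ _. Qed.

Lemma L1 : L 1 = 1.
Proof. by case: hBB => _ [_ _ h _ _] _ _ _. Qed.

Lemma L_star x : L (sB x) = sA (L x).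
Proof. by case: hBB => _ [_ _ _ h _] _ _ _. Qed.

Lemma Rm1 : Rm 1 = 1.
Proof. by case: hBB => _ _ [_ _ h _ _] _ _. Qed.

Lemma Rm_star x : Rm (sB x) = sA (Rm x).
Proof. by case: hBB => _ _ [_ _ _ h _] _ _. Qed.

Lemma LRmC x y : L x * Rm y = Rm y * L x.
Proof. by case: hBB. Qed.

Lemma EB x y : E (x - y) = E x - E y.
Proof. by case: hBB => _ _ _ _ [hE _ _ _]; exact: clinearB. Qed.

Lemma E1 : E 1 = 1.
Proof. by case: hBB => _ _ _ _ []. Qed.

Lemma E_bimod b1 b2 x : E (L b1 * Rm b2 * x) = b1 * E x * b2.
Proof. by case: hBB => _ _ _ _ [_ _ h _]. Qed.

Lemma E_mulL_mulRm x b : E (x * L b) = E (x * Rm b).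
Proof. by case: hBB => _ _ _ _ [_ _ _ h]. Qed.

Lemma E_mulL b x : E (L b * x) = b * E x.
Proof. by have := E_bimod b 1 x; rewrite Rm1 !mulr1. Qed.

Lemma E_mulRm b x : E (Rm b * x) = E x * b.
Proof. by have := E_bimod 1 b x; rewrite L1 !mul1r. Qed.

Lemma E_L b : E (L b) = b.
Proof. by rewrite -[L b]mulr1 E_mulL E1 mulr1. Qed.

Lemma tau0 : tau 0 = 0.
Proof. by case: hncps => [[_ [htau _ _]] _ _ _ _]; exact: clinear0. Qed.

Lemma tau_LE x : tau x = tau (L (E x)).
Proof. by case: hncps => _ h _ _ _; case: (h x). Qed.

Lemma ip_iota x y : ip (iota x) (iota y) = tau (sA y * x).
Proof. by case: hL2. Qed.

Lemma iotaB x y : iota (x - y) = iota x - iota y.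
Proof. by case: hL2 => _ h _ _; exact: clinearB. Qed.

Lemma iota_mulL_mulRm x b : iota (x * L b) = iota (x * Rm b).
Proof.
apply/eqP; rewrite -subr_eq0; apply/eqP; rewrite -iotaB.
apply: (ipxx_eq0 hH).
have E0 : E (sA x * x * (L b - Rm b)) = 0.
  by rewrite mulrBr EB E_mulL_mulRm subrr.
rewrite ip_iota tau_LE -mulrBr sAM sAB -L_star -Rm_star -!mulrA mulrBl EB.
by rewrite E_mulL E_mulRm !mulrA E0 mulr0 mul0r subrr L0 tau0.
Qed.

Lemma iota_Rm b : iota (Rm b) = iota (L b).
Proof. by rewrite -[Rm b]mul1r -iota_mulL_mulRm mul1r. Qed.

Lemma sA_LRm b1 b2 : sA (L b1 * Rm b2) = L (sB b1) * Rm (sB b2).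
Proof. by rewrite sAM -L_star -Rm_star LRmC. Qed.

Lemma iota_LRmL b1 b2 c : iota (L b1 * Rm b2 * L c) = iota (L (b1 * c * b2)).
Proof. by rewrite -mulrA -LRmC mulrA -LM -iota_mulL_mulRm -LM. Qed.

Lemma lamB a x y : lam a (x - y) = lam a x - lam a y.
Proof. by case: (hlam a) => h _ _; exact: clinearB. Qed.

Lemma lam_bounded a : bounded_op ip (lam a).
Proof. by case: (hlam a). Qed.

Lemma lam_iota a x : lam a (iota x) = iota (a * x).
Proof. by case: (hlam a). Qed.

Lemma lam_adj a v y : ip (lam a v) (iota y) = ip v (iota (sA a * y)).
Proof.
have [_ _ _ dense] := hL2.
apply: (@hclosure_eq _ _ ip (fun eta => exists x, eta = iota x)
  (fun u => ip (lam a u) (iota y)) (fun u => ip u (iota (sA a * y)))) (dense v).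
- by move=> u w; rewrite lamB (ipBl hH).
- by move=> u w; rewrite (ipBl hH).
- exact (bounded_functional_ip hH (iota y) (lam_bounded a)).
- exact (bounded_functional_ip hH (iota (sA a * y)) (bounded_op_id ip)).
- by move=> _ [x ->]; rewrite lam_iota !ip_iota sAM sAK mulrA.
Qed.

Lemma ip_proj_iota1 xi : ip xi (iota 1) = ip (Et xi) (iota 1).
Proof.
apply/eqP; rewrite -subr_eq0 -(ipBl hH) (hEt xi).2 //.
by apply: (@hclosure_self _ _ _ hH LB); exists 1; rewrite L1.
Qed.

Lemma proj_eq_ipL xi1 xi2 :
  (forall c, ip xi1 (iota (L c)) = ip xi2 (iota (L c))) -> Et xi1 = Et xi2.
Proof.
move=> h; apply: (orth_proj_eq hH hEt) => _ [c ->].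
by rewrite (ipBl hH) h subrr.
Qed.

Lemma proj_eq_lamL xi1 xi2 :
  (forall b, ip (lam (L b) xi1) (iota 1) = ip (lam (L b) xi2) (iota 1)) ->
  Et xi1 = Et xi2.
Proof.
move=> h; apply: proj_eq_ipL => c.
by have := h (sB c); rewrite !lam_adj mulr1 -L_star sBK.
Qed.

Lemma proj_eq_lamRm xi1 xi2 :
  (forall b, ip (lam (Rm b) xi1) (iota 1) = ip (lam (Rm b) xi2) (iota 1)) ->
  Et xi1 = Et xi2.
Proof.
move=> h; apply: proj_eq_ipL => c.
by have := h (sB c); rewrite !lam_adj mulr1 -Rm_star sBK iota_Rm.
Qed.

Lemma proj_lam_LRm b1 b2 xi :
  Et (lam (L b1 * Rm b2) xi) = lam (L b1 * Rm b2) (Et xi).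
Proof.
apply: (orth_proj_uniq hH hEt).
  apply: (hclosure_map (lamB _) (lam_bounded _)); last exact: (hEt xi).1.
  by move=> _ [c ->]; rewrite lam_iota iota_LRmL; exists (b1 * c * b2).
move=> _ [c ->]; rewrite -lamB lam_adj sA_LRm iota_LRmL (hEt xi).2 //.
by apply: (@hclosure_self _ _ _ hH LB); exists (sB b1 * c * sB b2).
Qed.

Lemma proj_lam_L2B a a' :
  (forall c, exists c', iota (a' * L c) = iota (L c')) ->
  (forall c d, tau (L c * (a * L d)) = tau (L c * (a' * L d))) ->
  forall zeta, L2B ip iota L zeta -> Et (lam a zeta) = lam a' zeta.
Proof.
move=> a'LB htau zeta hzeta; apply: (orth_proj_uniq hH hEt).
  apply: (hclosure_map (lamB _) (lam_bounded _)) hzeta.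
  by move=> _ [c ->]; rewrite lam_iota; apply: a'LB.
move=> _ [c ->]; rewrite (ipBl hH); apply/eqP; rewrite subr_eq0; apply/eqP.
apply: (@hclosure_eq _ _ ip LB (fun u => ip (lam a u) (iota (L c)))
  (fun u => ip (lam a' u) (iota (L c)))) hzeta.
- by move=> u w; rewrite lamB (ipBl hH).
- by move=> u w; rewrite lamB (ipBl hH).
- exact (bounded_functional_ip hH (iota (L c)) (lam_bounded a)).
- exact (bounded_functional_ip hH (iota (L c)) (lam_bounded a')).
- by move=> _ [d ->]; rewrite !lam_iota !ip_iota -L_star htau.
Qed.

Lemma proj_lam_commRm a : (forall b, a * Rm b = Rm b * a) ->
  forall zeta, L2B ip iota L zeta -> Et (lam a zeta) = lam (L (E a)) zeta.
Proof.
move=> aRm; apply: proj_lam_L2B => [c|c d]; first by exists (E a * c); rewrite LM.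
by rewrite tau_LE [RHS]tau_LE !E_mulL E_mulL_mulRm aRm E_mulRm E_L.
Qed.

Lemma proj_lam_commL a : (forall b, a * L b = L b * a) ->
  forall zeta, L2B ip iota L zeta -> Et (lam a zeta) = lam (Rm (E a)) zeta.
Proof.
move=> aL; apply: proj_lam_L2B => [c|c d].
  by exists (c * E a); rewrite -LRmC -iota_mulL_mulRm LM.
by rewrite tau_LE [RHS]tau_LE !E_mulL aL E_mulL E_mulRm !E_L.
Qed.

End ProbabilitySpace.

Theorem proposition3p9 (R : realType) (A B : algType R[i])
  (sA : A -> A) (sB : B -> B) (L Rm : B -> A) (E : A -> B) (tau : A -> R[i])
  (H : lmodType R[i]) (ip : H -> H -> R[i]) (iota : A -> H)
  (lam : A -> H -> H) (Et : H -> H) :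
  analytical_BB_ncps sA sB L Rm E tau ->
  L2_of sA tau ip iota ->
  left_mult_ext ip iota lam ->
  orth_proj ip (L2B ip iota L) Et ->
  forall (a : A) (b b1 b2 : B) (xi xi1 xi2 zeta : H), L2B ip iota L zeta ->
  (* (i) *) ip xi (iota 1) = ip (Et xi) (iota 1) /\
  (* (ii) *) Et (iota (a * L b)) = Et (iota (a * Rm b)) /\
  (* (iii) *) Et (lam (L b1 * Rm b2) xi) = lam (L b1 * Rm b2) (Et xi) /\
  (* (iv) *) ((forall b', a * Rm b' = Rm b' * a) ->
              Et (lam a zeta) = lam (L (E a)) zeta) /\
  (* (v) *) ((forall b', a * L b' = L b' * a) ->
              Et (lam a zeta) = lam (Rm (E a)) zeta) /\
  (* (vi) *) ((forall b', ip (lam (L b') xi1) (iota 1) = ip (lam (L b') xi2) (iota 1)) ->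
              Et xi1 = Et xi2) /\
  (* (vii) *) ((forall b', ip (lam (Rm b') xi1) (iota 1) = ip (lam (Rm b') xi2) (iota 1)) ->
              Et xi1 = Et xi2).
Proof.
move=> hncps hL2 hlam hEt a b b1 b2 xi xi1 xi2 zeta hzeta.
split; first exact (ip_proj_iota1 hncps hL2 hEt xi).
split; first by rewrite (iota_mulL_mulRm hncps hL2).
split; first exact (proj_lam_LRm hncps hL2 hlam hEt b1 b2 xi).
split; first by move=> aRm; apply: (proj_lam_commRm hncps hL2 hlam hEt aRm).
split; first by move=> aL; apply: (proj_lam_commL hncps hL2 hlam hEt aL).
split; first exact: (proj_eq_lamL hncps hL2 hlam hEt).
exact: (proj_eq_lamRm hncps hL2 hlam hEt).
Qed.
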